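(* In the stochastic epidemic model described in the context, let $u(k)=K\,I(k)$ for all $k\ge0$ with a constant gain $0\le K\le (1-d_{\max})/v_{\max}$. Then for $k=1,2,\dots,\lfloor S_0/(\delta_{\max}I_0)\rfloor$, $$\mathbb{E}[S(k)]=\begin{cases} S_0-\dfrac{\overline{\delta}\,I_0\left(1-(1+\overline{\delta}-\overline{d_I}-K\overline{v})^k\right)}{K\overline{v}-\overline{\delta}+\overline{d_I}}, & K\overline{v}>\overline{\delta}-\overline{d_I},\\[2mm] S_0-I_0\,\overline{\delta}\,k, & K\overline{v}=\overline{\delta}-\overline{d_I}.\end{cases}$$
   Context: Time is indexed by days $k=0,1,2,\dots$. Let $(\delta(k))_{k\ge0}$, $(d_I(k))_{k\ge0}$, $(v(k))_{k\ge0}$ be three mutually independent sequences of random variables, each sequence i.i.d. in $k$, with $0\le \delta(k)\le \delta_{\max}$ (where $\delta_{\max}>0$), $0\le d_I(k)\le d_{\max}$ where $d_{\max}<1$, and $0<v_{\min}\le v(k)\le v_{\max}\le 1$. Write $\overline{\delta}=\mathbb{E}[\delta(k)]$, $\overline{d_I}=\mathbb{E}[d_I(k)]$, $\overline{v}=\mathbb{E}[v(k)]$. Given a control sequence $u(k)$, the cases evolve by $S(k+1)=S(k)-\delta(k)I(k)$, $I(k+1)=(1+\delta(k))I(k)-v(k)u(k)-d_I(k)I(k)$, $R(k+1)=R(k)+v(k)u(k)$, $D(k+1)=D(k)+d_I(k)I(k)$, with $S(0)=S_0$, $I(0)=I_0>0$, $R(0)=D(0)=0$, $I_0\delta_{\max}<S_0$.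 $\lfloor z\rfloor=\max\{n\in\mathbb{Z}:n\le z\}$. *)

From HB Require Import structures.
From mathcomp Require Import all_boot all_order all_algebra.
From mathcomp Require Import all_classical all_reals all_analysis.
Set Implicit Arguments. Unset Strict Implicit. Unset Printing Implicit Defensive.
Import Order.TTheory GRing.Theory Num.Theory.
Local Open Scope classical_set_scope.
Local Open Scope ring_scope.

Section Defs.
Context {d : measure_display} {T : measurableType d} {R : realType}.
Variable P : probability T R.

Definition mutually_independent (I : eqType) (X : I -> {RV P >-> R}) : Prop :=
  forall (J : seq I) (B : I -> set R), uniq J ->
    (forall i, measurable (B i)) ->
    P (\bigcap_(i in [set` J]) (X i @^-1` B i)) =
    \big[*%E/1%E]_(i <- J) P (X i @^-1` B i).

Definition ident_distributed (X : nat -> {RV P >-> R}) : Prop :=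
  forall k (B : set R), measurable B -> P (X k @^-1` B) = P (X 0 @^-1` B).

(* The three noise sequences delta, d_I, v gathered into a single family,
   so that "the three sequences are mutually independent, each one i.i.d."
   is expressed by mutual independence of the whole family. *)
Definition noise_family (delta dI v : nat -> {RV P >-> R})
    (i : ((nat + nat) + nat)%type) : {RV P >-> R} :=
  match i with
  | inl (inl k) => delta k
  | inl (inr k) => dI k
  | inr k => v k
  end.
End Defs.

Fixpoint epid_state {T : Type} {R : realType} (delta dI v : nat -> T -> R)
    (ctrl : R -> R) (S0 I0 : R) (k : nat) (w : T) : R * R * R * R :=
  match k with
  | 0%N => (S0, I0, 0, 0)
  | k'.+1 =>
      let: (Sk, Ik, Rk, Dk) := epid_state delta dI v ctrl S0 I0 k' w in
      let u := ctrl Ik in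
      (Sk - delta k' w * Ik,
       (1 + delta k' w) * Ik - v k' w * u - dI k' w * Ik,
       Rk + v k' w * u,
       Dk + dI k' w * Ik)
  end.

Definition S_of {T : Type} {R : realType} (delta dI v : nat -> T -> R)
  (ctrl : R -> R) (S0 I0 : R) (k : nat) (w : T) : R :=
  (epid_state delta dI v ctrl S0 I0 k w).1.1.1.

From HB Require Import structures.
From mathcomp Require Import all_boot all_order all_algebra.
From mathcomp Require Import all_classical all_reals all_analysis.
From mathcomp Require Import finmap measurable_realfun ring lra.

(* Under the feedback u = K I the infected count is I(k) = I0 a_0 ... a_(k-1)
   with growth factors a_i = 1 + delta(i) - K v(i) - d_I(i) >= 0, hence
   S(k) = S0 - I0 sum_(j < k) delta(j) a_0 ... a_(j-1).  Each summand is
   affine in each noise variable, and the variables it involves are drawn on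
   pairwise distinct days, so by independence its expectation is obtained by
   replacing every variable with its mean: delta_bar q^j, where
   q = 1 + delta_bar - dI_bar - K v_bar.  The formula is a geometric sum.  Independence is given as a product rule for events; it
   yields the product rule for expectations by approximating one factor with
   simple functions and passing to the limit by monotone convergence. *)

Set Implicit Arguments.
Unset Strict Implicit.
Unset Printing Implicit Defensive.
Import Order.TTheory GRing.Theory Num.Theory HBNNSimple.
Local Open Scope classical_set_scope.
Local Open Scope ring_scope.

Section integral_mul_indep.
Context d (T : measurableType d) (R : realType) (P : probability T R).
Local Open Scope ereal_scope.
Variables Z Y : T -> R.
Hypotheses (mZ : measurable_fun setT Z) (mY : measurable_fun setT Y).
Hypotheses (Z0 : forall x, (0 <= Z x)%R) (Y0 : forall x, (0 <= Y x)%R).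
Hypothesis finY : \int[P]_x (Y x)%:E \is a fin_num.
Hypothesis indep : forall A, measurable A ->
  \int[P]_x (\1_(Z @^-1` A) x * Y x)%:E = P (Z @^-1` A) * \int[P]_x (Y x)%:E.

Lemma integral_nnsfun_compM_indep (h : {nnsfun R >-> R}) :
  \int[P]_x (h (Z x) * Y x)%:E = \int[P]_x (h (Z x))%:E * \int[P]_x (Y x)%:E.
Proof.
set s : seq R := fset_set (range h).
have s0 (i : 'I_(size s)) : (0 <= s`_i)%R.
  have : s`_i \in fset_set (range h) by exact: mem_nth.
  by rewrite in_fset_set; [case/set_mem=> r _ <- | exact: fimfunP].
have mhZ A : measurable A -> measurable (Z @^-1` (h @^-1` A)).
  move=> mA; rewrite -[_ @^-1` _]setTI.
  by apply: mZ => //; exact: (measurable_funPTI h).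
have expand (W : T -> R) : measurable_fun setT W -> (forall x, 0 <= W x)%R ->
    \int[P]_x (h (Z x) * W x)%:E = \sum_(i < size s)
      (s`_i)%:E * \int[P]_x (\1_(Z @^-1` (h @^-1` [set s`_i])) x * W x)%:E.
  move=> mW W0.
  transitivity (\int[P]_x (\sum_(i < size s)
      (s`_i)%:E * (\1_(Z @^-1` (h @^-1` [set s`_i])) x * W x)%:E)).
    apply: eq_integral => x _; rewrite sumEFin fimfunEord -/s mulr_suml.
    by congr EFin; apply: eq_bigr => i _; rewrite -mulrA.
  have mI (i : 'I_(size s)) : measurable_fun setT
      (fun x => \1_(Z @^-1` (h @^-1` [set s`_i])) x * W x)%R.
    by apply: measurable_funM => //; apply: measurable_indic; exact: mhZ.
  rewrite ge0_integral_sum //; last first.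
  - by move=> i x _; rewrite -EFinM lee_fin !mulr_ge0.
  - by move=> i; apply: measurable_funeM; exact/measurable_EFinP.
  apply: eq_bigr => i _; rewrite ge0_integralZl_EFin //.
  - by move=> x _; rewrite lee_fin mulr_ge0.
  - exact/measurable_EFinP.
have h_mul1 : \int[P]_x (h (Z x))%:E = \int[P]_x (h (Z x) * 1)%:E.
  by under [RHS]eq_integral do rewrite mulr1.
rewrite h_mul1 !expand //.
rewrite ge0_sume_distrl; last first.
  by move=> i _; rewrite mule_ge0 ?lee_fin // integral_ge0.
apply: eq_bigr => i _.
rewrite indep; last exact: (measurable_funPTI h (measurable_set1 _)).
under [X in _ = _ * X * _]eq_integral do rewrite mulr1.
by rewrite integral_indic ?setIT ?muleA //; exact: mhZ.
Qed.

Lemma integral_mul_indep :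
  \int[P]_x (Z x * Y x)%:E = \int[P]_x (Z x)%:E * \int[P]_x (Y x)%:E.
Proof.
have mabs : measurable_fun [set: R] (fun r : R => (`|r|)%:E).
  by apply/measurable_EFinP; exact: normr_measurable.
pose h := nnsfun_approx measurableT mabs.
have approxZ (W : T -> R) : measurable_fun setT W -> (forall x, 0 <= W x)%R ->
    \int[P]_x (h n (Z x) * W x)%:E @[n --> \oo] --> \int[P]_x (Z x * W x)%:E.
  move=> mW W0.
  have hZW x : (h n (Z x) * W x)%:E @[n --> \oo] --> (Z x * W x)%:E.
    under eq_fun do rewrite EFinM.
    rewrite EFinM; apply: cvgeZr => //.
    have abs0 (r : R) : setT r -> 0 <= `|r|%:E by rewrite lee_fin.
    have := cvg_nnsfun_approx measurableT mabs abs0 (Logic.I : setT (Z x)).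
    by rewrite ger0_norm.
  have -> : \int[P]_x (Z x * W x)%:E =
      \int[P]_x limn (fun n => (h n (Z x) * W x)%:E).
    by apply: eq_integral => x _; rewrite (cvg_lim _ (hZW x)).
  apply: cvg_monotone_convergence => //.
  - move=> n; apply/measurable_EFinP; apply: measurable_funM => //.
    exact: measurableT_comp.
  - by move=> n x _; rewrite lee_fin mulr_ge0.
  - move=> x _ m n mn; rewrite lee_fin ler_wpM2r //.
    exact/lefP/nd_nnsfun_approx.
have := approxZ Y mY Y0.
under eq_fun do rewrite integral_nnsfun_compM_indep.
have := approxZ (cst 1%R) (measurable_cst _) (fun=> ler01).
under eq_fun do under eq_integral do rewrite mulr1.
under eq_integral do rewrite mulr1.
move=> /(cvgeZr finY) /cvg_lim <- // /cvg_lim <- //.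
Qed.

End integral_mul_indep.

Section integral_prod_indep.
Context d (T : measurableType d) (R : realType) (P : probability T R).
Local Open Scope ereal_scope.
Variables (I : choiceType) (X : I -> {RV P >-> R}).
Hypothesis indepX : mutually_independent X.
Hypothesis X0 : forall i x, (0 <= X i x)%R.
Variable m : I -> R.
Hypothesis EX : forall i, \int[P]_x (X i x)%:E = (m i)%:E.

Let event (L : seq I) (B : I -> set R) :=
  \bigcap_(i in [set` L]) (X i @^-1` B i).

Let event_cons j L B : event (j :: L) B = X j @^-1` B j `&` event L B.
Proof. by rewrite /event !bigcap_seq big_cons. Qed.

Let measurable_event L B :
  (forall i, measurable (B i)) -> measurable (event L B).
Proof.
move=> mB; elim: L => [|j L IH]; first by rewrite /event bigcap_seq big_nil.
by rewrite event_cons; apply: measurableI => //; exact: measurable_funPTI.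
Qed.

Lemma integral_prod_indic_indep (J L : seq I) (B : I -> set R) :
  uniq (J ++ L) -> (forall i, measurable (B i)) ->
  \int[P]_x (\prod_(i <- J) X i x * \1_(event L B) x)%:E =
  (\prod_(i <- J) m i)%:E * P (event L B).
Proof.
(* The indicator factor makes the induction hypothesis strong enough to
   provide the hypothesis [indep] of [integral_mul_indep] for [X j]. *)
elim: J L B => [|j J IH] L B uJL mB.
  under eq_integral do rewrite big_nil mul1r.
  by rewrite integral_indic ?setIT ?big_nil ?mul1e //; exact: measurable_event.
move: uJL; rewrite /= mem_cat negb_or -andbA => /and3P[jJ jL uJL].
have uL : uniq L by move: uJL; rewrite cat_uniq => /and3P[].
pose Y x := (\prod_(i <- J) X i x * \1_(event L B) x)%R.
have mY : measurable_fun setT Y.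
  apply: measurable_funM; last exact/measurable_indic/measurable_event.
  by apply: measurable_prod => i _; exact: measurable_funP.
have Y0 x : (0 <= Y x)%R by rewrite mulr_ge0 ?prodr_ge0.
have finY : \int[P]_x (Y x)%:E \is a fin_num.
  rewrite IH // fin_numM // ge0_fin_numE ?measure_ge0 //.
  rewrite (le_lt_trans (probability_le1 _ _)) ?ltry //.
  exact: measurable_event.
have indepY A : measurable A -> \int[P]_x (\1_(X j @^-1` A) x * Y x)%:E =
    P (X j @^-1` A) * \int[P]_x (Y x)%:E.
  move=> mA; pose B' i := if i == j then A else B i.
  have mB' i : measurable (B' i) by rewrite /B'; case: ifP.
  have B'L i : i \in L -> B' i = B i.
    by move=> iL; rewrite /B'; case: eqP => // ij; move: jL; rewrite -ij iL.
  have eqB'L : event L B' = event L B.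
    by rewrite /event !bigcap_seq; apply: eq_big_seq => i /B'L ->.
  have uJjL : uniq (J ++ j :: L).
    by rewrite -cat1s uniq_catCA /= mem_cat negb_or jJ jL.
  transitivity (\int[P]_x (\prod_(i <- J) X i x * \1_(event (j :: L) B') x)%:E).
    apply: eq_integral => x _; congr EFin.
    by rewrite event_cons eqB'L indicI /B' eqxx /Y mulrCA.
  rewrite IH // IH // muleCA; congr (_ * _).
  rewrite /event !indepX //=; last by rewrite jL uL.
  rewrite big_cons; congr (_ * _); first by rewrite /B' eqxx.
  by apply: eq_big_seq => i /B'L ->.
under eq_integral do rewrite big_cons -mulrA -/(Y _).
rewrite (integral_mul_indep (measurable_funP (X j)) mY (X0 j) Y0 finY indepY).
by rewrite EX IH // big_cons EFinM muleA.
Qed.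

Lemma integral_prod_indep (J : seq I) : uniq J ->
  \int[P]_x (\prod_(i <- J) X i x)%:E = (\prod_(i <- J) m i)%:E.
Proof.
move=> uJ.
have := integral_prod_indic_indep (J := J) (L := [::]) (B := fun=> setT).
rewrite cats0 => /(_ uJ (fun=> measurableT)).
have -> : event [::] (fun=> setT) = setT by rewrite /event bigcap_seq big_nil.
rewrite probability_setT mule1 => <-.
by apply: eq_integral => x _; rewrite indicT mulr1.
Qed.

End integral_prod_indep.

Lemma expectation_ident_distributed d (T : measurableType d) (R : realType)
    (P : probability T R) (X : nat -> {RV P >-> R}) :
  ident_distributed X -> (forall j x, 0 <= X j x) ->
  forall j, ('E_P[X j] = 'E_P[X 0%N])%E.
Proof.
move=> idX X0 j; rewrite !ge0_expectation_ccdf //.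
by apply: eq_integral => r _; apply: idX; exact: measurable_itv.
Qed.

Section linear_feedback.
Context {T : Type} {R : realType} (delta dI v : nat -> T -> R) (K : R).

Definition growth_factor (i : nat) (w : T) : R :=
  1 + delta i w - K * v i w - dI i w.

Definition growth (j : nat) (w : T) : R := \prod_(i < j) growth_factor i w.

Lemma epid_state_linear_feedback (S0 I0 : R) (k : nat) (w : T) :
  let st := epid_state delta dI v (fun I => K * I) S0 I0 k w in
  st.1.1.1 = S0 - I0 * \sum_(j < k) delta j w * growth j w /\
  st.1.1.2 = I0 * growth k w.
Proof.
elim: k => [|k IH] /=; first by rewrite /growth !big_ord0 mulr0 subr0 mulr1.
move: IH; case: epid_state => [[[Sk Ik] Rk] Dk] /= [-> ->].
by rewrite /growth !big_ord_recr /= /growth_factor; split; ring.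
Qed.

End linear_feedback.

Lemma ge0_integralD_EFin d (T : measurableType d) (R : realType)
    (mu : {measure set T -> \bar R}) (f g : T -> R) :
  measurable_fun setT f -> measurable_fun setT g ->
  (forall x, 0 <= f x) -> (forall x, 0 <= g x) ->
  (\int[mu]_x (f x + g x)%:E = \int[mu]_x (f x)%:E + \int[mu]_x (g x)%:E)%E.
Proof.
move=> mf mg f0 g0; under eq_integral do rewrite EFinD.
apply: ge0_integralD => //.
all: by (move=> x _; rewrite lee_fin) || exact/measurable_EFinP.
Qed.

Section noise_moments.
Context d (T : measurableType d) (R : realType) (P : probability T R).
Local Open Scope ereal_scope.
Variables (delta dI v : nat -> {RV P >-> R}) (K dbar dIbar vbar : R).
Local Notation dl := (fun j => delta j : T -> R).
Local Notation dIl := (fun j => dI j : T -> R).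
Local Notation vl := (fun j => v j : T -> R).
Local Notation X := (noise_family delta dI v).
Local Notation F := (growth dl dIl vl K).
Hypothesis indep : mutually_independent X.
Hypotheses (delta0 : forall j x, (0 <= delta j x)%R)
  (dI0 : forall j x, (0 <= dI j x)%R) (v0 : forall j x, (0 <= v j x)%R).
Hypotheses (Edelta : forall j, 'E_P[delta j] = dbar%:E)
  (EdI : forall j, 'E_P[dI j] = dIbar%:E) (Ev : forall j, 'E_P[v j] = vbar%:E).
Hypothesis K0 : (0 <= K)%R.
Hypothesis growth_factor0 : forall i x, (0 <= growth_factor dl dIl vl K i x)%R.

Let q := (1 + dbar - dIbar - K * vbar)%R.

Let mean (i : (nat + nat) + nat) : R :=
  match i with inl (inl _) => dbar | inl (inr _) => dIbar | inr _ => vbar end.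

Let day (i : (nat + nat) + nat) : nat :=
  match i with inl (inl j) | inl (inr j) | inr j => j end.

Let X0 i x : (0 <= X i x)%R.
Proof. by case: i => [[j|j]|j]; [exact: delta0|exact: dI0|exact: v0]. Qed.

Let EX i : \int[P]_x (X i x)%:E = (mean i)%:E.
Proof.
rewrite -expectation_def.
by case: i => [[j|j]|j]; [exact: Edelta|exact: EdI|exact: Ev].
Qed.

Let growth0 j x : (0 <= F j x)%R.
Proof. exact: prodr_ge0. Qed.

Let measurable_growth j : measurable_fun setT (F j).
Proof.
apply: measurable_prod => i _.
by repeat apply: measurable_funB => //;
  apply: measurable_funD || apply: measurable_funM.
Qed.

Let measurable_prod_noise (J : seq ((nat + nat) + nat)) :
  measurable_fun setT (fun x => \prod_(i <- J) X i x)%R.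
Proof. by apply: measurable_prod => i _; exact: measurable_funP. Qed.

Let integral_growthS_mul j (W : T -> R) :
  measurable_fun setT W -> (forall x, 0 <= W x)%R ->
  \int[P]_x (F j.+1 x * W x)%:E + K%:E * \int[P]_x (F j x * (v j x * W x))%:E
    + \int[P]_x (F j x * (dI j x * W x))%:E =
  \int[P]_x (F j x * W x)%:E + \int[P]_x (F j x * (delta j x * W x))%:E.
Proof.
(* The negative terms of the growth factor are moved to the left-hand side,
   so that only integrals of nonnegative functions occur. *)
move=> mW W0.
have mFXW i : measurable_fun setT (fun x => F j x * (X i x * W x))%R.
  by apply: measurable_funM => //; apply: measurable_funM.
have FXW0 i x : (0 <= F j x * (X i x * W x))%R by rewrite !mulr_ge0.
rewrite -ge0_integralZl_EFin //; last exact/measurable_EFinP/(mFXW (inr j)).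
  under eq_integral do rewrite -EFinM.
  rewrite -!ge0_integralD_EFin //.
  all: try by move=> x; rewrite ?addr_ge0 ?mulr_ge0.
  all: try by repeat (apply: measurable_funD || apply: measurable_funM).
  apply: eq_integral => x _; congr EFin.
  by rewrite /growth big_ord_recr /= /growth_factor; ring.
by move=> x _; rewrite lee_fin (FXW0 (inr j)).
Qed.

Lemma integral_growth_mul_prod_noise j (J : seq ((nat + nat) + nat)) :
  uniq J -> (forall i, i \in J -> (j <= day i)%N) ->
  \int[P]_x (F j x * \prod_(i <- J) X i x)%:E =
  (q ^+ j * \prod_(i <- J) mean i)%:E.
Proof.
elim: j J => [|j IH] J uJ dayJ.
  under eq_integral do rewrite /growth big_ord0 mul1r.
  by rewrite (integral_prod_indep indep X0 EX uJ) expr0 mul1r.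
pose W x := (\prod_(i <- J) X i x)%R; pose M := (\prod_(i <- J) mean i)%R.
have IHW : \int[P]_x (F j x * W x)%:E = (q ^+ j * M)%:E.
  by apply: IH => // i /dayJ /ltnW.
have IHday i0 : day i0 = j ->
    \int[P]_x (F j x * (X i0 x * W x))%:E = (q ^+ j * (mean i0 * M))%:E.
  move=> di0; have uiJ : uniq (i0 :: J).
    by rewrite /= uJ andbT; apply/negP => /dayJ; rewrite di0 ltnn.
  have := IH (i0 :: J) uiJ; rewrite big_cons => <-.
    by apply: eq_integral => x _; rewrite big_cons.
  by move=> i; rewrite inE => /orP[/eqP -> | /dayJ /ltnW]; rewrite ?di0.
have := @integral_growthS_mul j W (measurable_prod_noise J)
  (fun x => prodr_ge0 _ (fun i _ => X0 i x)).
rewrite (IHday (inl (inl j)) erefl) (IHday (inl (inr j)) erefl).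
rewrite (IHday (inr j) erefl) IHW.
case: (\int[P]_x _) => [r| |] //=; rewrite -!EFinM -!EFinD /mean => -[r_eq].
congr EFin; apply: (addIr (K * (q ^+ j * (vbar * M)) + q ^+ j * (dIbar * M))%R).
by rewrite addrA r_eq -/M exprS /q; ring.
Qed.

Lemma integral_delta_growth j :
  \int[P]_x (delta j x * F j x)%:E = (q ^+ j * dbar)%:E.
Proof.
have := integral_growth_mul_prod_noise (j := j) (J := [:: inl (inl j)]) erefl.
under eq_integral do rewrite big_seq1 mulrC.
by rewrite big_seq1; apply=> i; rewrite inE => /eqP ->.
Qed.

Lemma expectation_S_linear_feedback (S0 I0 : R) (k : nat) : (0 <= I0)%R ->
  'E_P[S_of dl dIl vl (fun I => K * I)%R S0 I0 k] =
  (S0 - I0 * dbar * \sum_(j < k) q ^+ j)%:E.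
Proof.
move=> I00; pose G x := (I0 * \sum_(j < k) delta j x * F j x)%R.
have mG : measurable_fun setT G.
  apply: measurable_funM => //; apply: measurable_sum => j.
  exact: measurable_funM.
have G0 x : (0 <= G x)%R.
  by rewrite mulr_ge0 ?sumr_ge0 // => j _; rewrite mulr_ge0.
have intG : \int[P]_x (G x)%:E = (I0 * dbar * \sum_(j < k) q ^+ j)%:E.
  under eq_integral do rewrite EFinM -sumEFin.
  rewrite ge0_integralZl_EFin //; first last.
  - apply: emeasurable_sum => j.
    by apply/measurable_EFinP; exact: measurable_funM.
  - by move=> x _; rewrite sume_ge0 // => j _; rewrite lee_fin mulr_ge0.
  rewrite ge0_integral_sum //; first last.
  - by move=> j x _; rewrite lee_fin mulr_ge0.
  - by move=> j; apply/measurable_EFinP; exact: measurable_funM.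
  under eq_bigr do rewrite integral_delta_growth.
  by rewrite sumEFin -EFinM -mulr_suml -mulrA [(dbar * _)%R]mulrC.
rewrite unlock /S_of.
under eq_integral do
  rewrite (proj1 (epid_state_linear_feedback _ _ _ _ _ _ _ _)) EFinB.
rewrite integralB_EFin //.
- have -> : \int[P]_x S0%:E = S0%:E.
    by have := expectation_cst P S0; rewrite unlock.
  by rewrite -/(G _) intG -EFinB.
- exact: (finite_measure_integrable_cst P S0 measurableT).
- apply/integrableP; split; first exact/measurable_EFinP.
  rewrite (eq_integral (fun x => (G x)%:E)) ?intG ?ltry // => x _.
  by rewrite /= ger0_norm //; exact: G0.
Qed.

End noise_moments.

Theorem lemma10 (d : measure_display) (T : measurableType d) (R : realType)
  (P : probability T R) (delta dI v : nat -> {RV P >-> R})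
  (delta_max d_max v_min v_max S0 I0 K delta_bar dI_bar v_bar : R) :
  mutually_independent (noise_family delta dI v) ->
  ident_distributed delta -> ident_distributed dI -> ident_distributed v ->
  0 < delta_max -> d_max < 1 -> 0 < v_min -> v_min <= v_max -> v_max <= 1 ->
  (forall k w, 0 <= delta k w <= delta_max) ->
  (forall k w, 0 <= dI k w <= d_max) ->
  (forall k w, v_min <= v k w <= v_max) ->
  ('E_P[delta 0%N] = delta_bar%:E)%E ->
  ('E_P[dI 0%N] = dI_bar%:E)%E ->
  ('E_P[v 0%N] = v_bar%:E)%E ->
  0 < I0 -> I0 * delta_max < S0 ->
  0 <= K -> K <= (1 - d_max) / v_max ->
  forall k : nat, (1 <= k)%N -> (k%:Z <= Num.floor (S0 / (delta_max * I0)))%R ->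
    let ES := ('E_P[S_of (fun j => delta j : T -> R) (fun j => dI j : T -> R)
                        (fun j => v j : T -> R) (fun I => (K * I)%R) S0 I0 k])%E in
    (K * v_bar > delta_bar - dI_bar ->
       ES = (S0 - delta_bar * I0 * (1 - (1 + delta_bar - dI_bar - K * v_bar) ^+ k)
                  / (K * v_bar - delta_bar + dI_bar))%:E) /\
    (K * v_bar = delta_bar - dI_bar ->
       ES = (S0 - I0 * delta_bar * k%:R)%:E).
Proof.
move=> indep id_delta id_dI id_v _ _ vmin0 vmin_max _ delta_bd dI_bd v_bd
  Edelta EdI Ev I0_gt0 _ K0 K_le k _ _ ES.
have delta0 j x : 0 <= delta j x by case/andP: (delta_bd j x).
have dI0 j x : 0 <= dI j x by case/andP: (dI_bd j x).
have v0 j x : 0 <= v j x by case/andP: (v_bd j x) => /(le_trans (ltW vmin0)).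
have KvI : K * v_max <= 1 - d_max.
  by rewrite -ler_pdivlMr // (lt_le_trans vmin0 vmin_max).
have factor0 i x : 0 <= growth_factor (fun j => delta j : T -> R)
    (fun j => dI j : T -> R) (fun j => v j : T -> R) K i x.
  have : K * v i x <= K * v_max by rewrite ler_wpM2l //; case/andP: (v_bd i x).
  case/andP: (dI_bd i x) => _; have := delta0 i x.
  by rewrite /growth_factor; lra.
pose q := 1 + delta_bar - dI_bar - K * v_bar.
have -> : ES = (S0 - I0 * delta_bar * \sum_(j < k) q ^+ j)%:E.
  apply: (expectation_S_linear_feedback indep) => // [j|j|j|];
    by rewrite ?expectation_ident_distributed // ltW.
split => [Kv_gt | Kv_eq].
- have q_ne1 : q - 1 != 0 by apply/eqP; rewrite /q; lra.
  have geom : \sum_(j < k) q ^+ j = (q ^+ k - 1) / (q - 1).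
    by rewrite subrX1 [(q - 1) * _]mulrC mulfK.
  rewrite geom; congr EFin; rewrite /q; field.
  by apply/andP; split; apply/eqP; lra.
- have -> : q = 1 by rewrite /q Kv_eq; ring.
  under eq_bigr do rewrite expr1n.
  by rewrite sumr_const card_ord mulr_natr mulrC.
Qed.
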